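(* Let $d\ge 2$ and consider a linear multiparameter eigenvalue problem $W_i(\mathbf{x})\mathbf{v}_i=\big(V_{i0}-\sum_{j=1}^d x_jV_{ij}\big)\mathbf{v}_i=0$, $1\le i\le d$, with $V_{ij}\in\mathbb{C}^{n_i\times n_i}$. Let $f_{\text{Dixon}}$ be the tensor Dixon function of $P_i=W_i$ with $x_d$ hidden. Then $f_{\text{Dixon}}$ does not depend on $s_1,\dots,s_{d-1},t_1,\dots,t_{d-1}$, and the generalized eigenvalue problem $f_{\text{Dixon}}(x_d)\mathbf{z}=0$ it yields is the same as the operator determinant generalized eigenvalue problem $(\Delta_d-x_d\Delta_0)\mathbf{z}=0$; precisely, $f_{\text{Dixon}}=c\,(\Delta_d-x_d\Delta_0)$ for some $c\in\{1,-1\}$.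
   Context: Kronecker block determinant: for a $d\times d$ array $M=(M_{ij})$ with $M_{ij}$ of size $n_i\times n_i$, $|M|_\otimes=\sum_{\sigma\in S_d}\mathrm{sgn}(\sigma)\,M_{1,\sigma(1)}\otimes M_{2,\sigma(2)}\otimes\cdots\otimes M_{d,\sigma(d)}$. Operator determinants: $\Delta_0=|(V_{ij})_{1\le i,j\le d}|_\otimes$, and $\Delta_d$ is the Kronecker block determinant of the array obtained from $(V_{ij})_{1\le i,j\le d}$ by replacing its $d$-th column with $(V_{10},\dots,V_{d0})^\top$. Tensor Dixon function with $x_d$ hidden: with variables $s_1,\dots,s_{d-1},t_1,\dots,t_{d-1},x_d$, let $M_{ij}=P_i(t_1,\dots,t_{j-1},s_j,\dots,s_{d-1},x_d)$ for $1\le i,j\le d$ (column $1$ at $(s_1,\dots,s_{d-1},x_d)$, column $d$ at $(t_1,\dots,t_{d-1},x_d)$), and $f_{\text{Dixon}}=|M|_\otimes/\prod_{i=1}^{d-1}(s_i-t_i)$. *)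

From HB Require Import structures.
From mathcomp Require Import all_boot all_order all_algebra all_fingroup.
From mathcomp Require Import mxtens complex.
From mathcomp Require Import reals.
Set Implicit Arguments. Unset Strict Implicit. Unset Printing Implicit Defensive.
Import GRing.Theory.
Local Open Scope ring_scope.

(* All indexing is 0-based for the rows (block row i here = row i+1 of the
   paper) and for the block columns (block column c here = column c+1 of the
   paper).  The second index of V keeps the paper's meaning:
   V i 0 = V_{i+1,0}, V i j = V_{i+1,j} for 1 <= j <= d.
   Variables x_1..x_d are a function x : nat -> C (only 1..d used). *)

Fixpoint kdim (n : nat -> nat) (k : nat) : nat :=
  if k is k'.+1 then (kdim n k' * n k')%N else 1%N.

Fixpoint ktens (R : pzRingType) (n : nat -> nat) (k : nat)
    (A : forall i : nat, 'M[R]_(n i)) : 'M[R]_(kdim n k) :=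
  if k is k'.+1 then ktens k' A *t A k' else 1%:M.

Definition perm_nat (d : nat) (s : 'S_d) (i : nat) : nat :=
  if insub i is Some j then nat_of_ord (s j) else i.

Definition kbdet (R : comPzRingType) (d : nat) (n : nat -> nat)
    (M : forall i : nat, nat -> 'M[R]_(n i)) : 'M[R]_(kdim n d) :=
  \sum_(s : 'S_d) (-1) ^+ s *: ktens d (fun i => M i (perm_nat s i)).

Definition Delta0 (R : comPzRingType) d n (V : forall i : nat, nat -> 'M[R]_(n i)) :=
  kbdet d (fun i j => V i j.+1).

Definition Deltad (R : comPzRingType) d n (V : forall i : nat, nat -> 'M[R]_(n i)) :=
  kbdet d (fun i j => if j == d.-1 then V i 0%N else V i j.+1).

Definition Wmp (R : comPzRingType) d n (V : forall i : nat, nat -> 'M[R]_(n i))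
    (i : nat) (x : nat -> R) : 'M[R]_(n i) :=
  V i 0%N - \sum_(1 <= j < d.+1) x j *: V i j.

Definition dixon_pt (R : Type) (d : nat) (s t : nat -> R) (xd : R) (c : nat) :
    nat -> R :=
  fun k => if k == d then xd else if (k <= c)%N then t k else s k.

Definition fDixon (R : fieldType) d n (V : forall i : nat, nat -> 'M[R]_(n i))
    (s t : nat -> R) (xd : R) : 'M[R]_(kdim n d) :=
  (\prod_(1 <= k < d) (s k - t k))^-1 *:
    kbdet d (fun i c => Wmp d V i (dixon_pt d s t xd c)).

From HB Require Import structures.
From mathcomp Require Import all_boot all_order all_algebra all_fingroup.
From mathcomp Require Import mxtens complex.
From mathcomp Require Import reals.
Import GRing.Theory.
Local Open Scope ring_scope.

(* The Kronecker block determinant is multilinear and alternating in the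
   block columns, and a permutation of the columns multiplies it by the sign.
   In the Dixon array, block column j+1 is block column j plus
   (s_j - t_j) V_ij, since the two evaluation points differ only in the j-th
   coordinate.  Subtracting from each column its left neighbour, starting
   from the right, therefore gives
   |M| = prod_j (s_j - t_j) |W_i(s, x_d), V_i1, ..., V_i(d-1)|.
   Subtracting s_j times column j+1 from the first column leaves
   V_i0 - x_d V_id there;
   moving it to the last position costs (-1)^(d-1), and linearity in that
   column yields Delta_d - x_d Delta_0. *)

Set Implicit Arguments. Unset Strict Implicit. Unset Printing Implicit Defensive.

Section KroneckerBlockDeterminant.
Variables (R : comPzRingType) (n : nat -> nat).

Lemma tensmx_linearl m1 m2 a (A B : 'M[R]_m1) (C : 'M[R]_m2) :
  (a *: A + B) *t C = a *: (A *t C) + B *t C.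
Proof. by apply/matrixP => i j; rewrite !mxE mulrDl mulrA. Qed.

Lemma tensmx_linearr m1 m2 a (A B : 'M[R]_m1) (C : 'M[R]_m2) :
  C *t (a *: A + B) = a *: (C *t A) + C *t B.
Proof. by apply/matrixP => i j; rewrite !mxE mulrDr mulrCA. Qed.

Lemma eq_ktens k (A B : forall i, 'M[R]_(n i)) :
  (forall i, (i < k)%N -> A i = B i) -> ktens k A = ktens k B.
Proof.
elim: k => [//|k IHk] eqAB /=.
by rewrite eqAB // IHk // => i /ltnW; apply: eqAB.
Qed.

Lemma ktens_linear k i0 a (X Y A : forall i, 'M[R]_(n i)) : (i0 < k)%N ->
  ktens k (fun i => if i == i0 then a *: X i + Y i else A i) =
  a *: ktens k (fun i => if i == i0 then X i else A i) +
  ktens k (fun i => if i == i0 then Y i else A i).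
Proof.
elim: k => [//|k IHk] lti0k /=.
have [-> | neqi0k] := eqVneq i0 k.
  have ktens_A Z : ktens k (fun i => if i == k then Z i else A i) = ktens k A.
    by apply: eq_ktens => i /ltn_eqF ->.
  by rewrite !ktens_A tensmx_linearr.
have lti0k' : (i0 < k)%N by rewrite ltn_neqAle neqi0k -ltnS.
by rewrite IHk // tensmx_linearl.
Qed.

Lemma perm_nat_val d (s : 'S_d) (j : 'I_d) : perm_nat s j = s j.
Proof. by rewrite /perm_nat valK. Qed.

Lemma perm_natE d (s : 'S_d) i (ltid : (i < d)%N) : perm_nat s i = s (Ordinal ltid).
Proof. exact: (perm_nat_val s (Ordinal ltid)). Qed.

Lemma perm_nat_lt d (s : 'S_d) i : (i < d)%N -> (perm_nat s i < d)%N.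
Proof. by move=> ltid; rewrite (perm_natE _ ltid). Qed.

Implicit Types M N : forall i : nat, nat -> 'M[R]_(n i).

Lemma eq_kbdet d M N :
  (forall i j, (i < d)%N -> (j < d)%N -> M i j = N i j) -> kbdet d M = kbdet d N.
Proof.
move=> eqMN; apply: eq_bigr => s _; congr (_ *: _).
by apply: eq_ktens => i ltid; apply: eqMN => //; apply: perm_nat_lt.
Qed.

Definition replace_col M (c : nat) (X : forall i, 'M[R]_(n i)) :
    forall i : nat, nat -> 'M[R]_(n i) :=
  fun i j => if j == c then X i else M i j.

Lemma kbdet_col_linear d M c a X Y : (c < d)%N ->
  kbdet d (replace_col M c (fun i => a *: X i + Y i)) =
  a *: kbdet d (replace_col M c X) + kbdet d (replace_col M c Y).
Proof.
move=> ltcd; rewrite /kbdet scaler_sumr -big_split /=; apply: eq_bigr => s _.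
pose i0 := val (s^-1 (Ordinal ltcd))%g.
have ktens_col Z : ktens d (fun i => replace_col M c Z i (perm_nat s i)) =
    ktens d (fun i => if i == i0 then Z i else M i (perm_nat s i)).
  apply: eq_ktens => k ltkd; rewrite /replace_col (perm_natE _ ltkd).
  rewrite -[c]/(val (Ordinal ltcd)) -[k]/(val (Ordinal ltkd)) /i0 !val_eqE.
  by congr (if _ then _ else _); apply/eqP/eqP => [<- | ->]; rewrite ?permK ?permKV.
by rewrite !ktens_col ktens_linear ?ltn_ord // scalerDr !scalerA mulrC.
Qed.

Lemma kbdet_alternate d M c1 c2 : (c1 < d)%N -> (c2 < d)%N -> c1 != c2 ->
  (forall i, M i c1 = M i c2) -> kbdet d M = 0.
Proof.
move=> ltc1d ltc2d neqc eqM; pose t := tperm (Ordinal ltc1d) (Ordinal ltc2d).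
have odd_mult s : odd_perm (s * t)%g = ~~ odd_perm s.
  by rewrite odd_permM odd_tperm -val_eqE neqc addbT.
rewrite /kbdet (bigID (@odd_perm _)) /=; apply: canLR (subrK _) _.
rewrite add0r -sumrN (reindex_inj (mulIg t)); apply: eq_big => //= s.
rewrite odd_mult => /negPf->; rewrite expr1 expr0 scaleN1r scale1r; congr (- _).
apply: eq_ktens => i ltid; rewrite !(perm_natE _ ltid) permM.
by case: tpermP => [->|->|] //=; rewrite eqM.
Qed.

Lemma kbdet_permute_cols d M (p : 'S_d) :
  kbdet d (fun i j => M i (perm_nat p j)) = (-1) ^+ p *: kbdet d M.
Proof.
rewrite /kbdet scaler_sumr (reindex_inj (mulIg p^-1)%g) /=; apply: eq_bigr => s _.
rewrite odd_permM odd_permV signr_addb scalerA [_ * (-1) ^+ p]mulrC.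
congr (_ *: _); apply: eq_ktens => i ltid.
by rewrite !(perm_natE _ ltid) permM perm_nat_val permKV.
Qed.

Lemma kbdet_rotate_cols d M : (0 < d)%N ->
  kbdet d (fun i j => M i (if j == d.-1 then 0%N else j.+1)) =
  (-1) ^+ d.-1 *: kbdet d M.
Proof.
case: d => [//|d] _; pose p : 'S_d.+1 := lift_perm ord_max ord0 1.
have -> : (-1) ^+ d.+1.-1 = (-1) ^+ p :> R.
  by rewrite odd_lift_perm odd_perm1 /= !addbF signr_odd.
rewrite -kbdet_permute_cols; apply: eq_kbdet => i j _ ltjd.
rewrite (perm_natE _ ltjd); congr (M i _); change j with (val (Ordinal ltjd)).
case: (unliftP ord_max (Ordinal ltjd)) => [k -> | ->]; last first.
  by rewrite lift_perm_id eqxx.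
by rewrite lift_perm_lift perm1 /= /bump leq0n leqNgt ltn_ord add0n (ltn_eqF (ltn_ord k)).
Qed.

Lemma kbdet_add_col_combination d M c X (r : seq nat) (a : nat -> R) :
  (c < d)%N -> all (fun j => (j < d) && (j != c))%N r ->
  kbdet d (replace_col M c (fun i => X i + \sum_(j <- r) a j *: M i j)) =
  kbdet d (replace_col M c X).
Proof.
move=> ltcd; elim: r X => [|j r IHr] X /=.
  by move=> _; apply: eq_kbdet => i k _ _; rewrite /replace_col big_nil addr0.
case/andP=> /andP[ltjd neqjc] all_r.
rewrite (eq_kbdet (N := replace_col M c
    (fun i => a j *: M i j + (X i + \sum_(k <- r) a k *: M i k)))); last first.
  by move=> i k _ _; rewrite /replace_col big_cons addrCA.
rewrite kbdet_col_linear // IHr // (kbdet_alternate (c1 := c) (c2 := j)) //.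
- by rewrite scaler0 add0r.
- by rewrite eq_sym.
- by move=> i; rewrite /replace_col eqxx (negbTE neqjc).
Qed.

End KroneckerBlockDeterminant.

Section OperatorDeterminants.
Variables (R : comPzRingType) (d : nat) (n : nat -> nat).
Variable V : forall i : nat, nat -> 'M[R]_(n i).

Lemma Wmp_update i k (x y : nat -> R) : (0 < k <= d)%N ->
  (forall j, j != k -> x j = y j) ->
  Wmp d V i x = (y k - x k) *: V i k + Wmp d V i y.
Proof.
move=> /andP[k_gt0 lekd] eqxy; rewrite /Wmp.
have k_in : k \in index_iota 1 d.+1 by rewrite mem_index_iota k_gt0 ltnS.
rewrite !(bigD1_seq k) ?iota_uniq //= (eq_bigr (fun j => y j *: V i j)); last first.
  by move=> j /eqxy ->.
by rewrite scalerBl [RHS]addrC !opprD !addrA [V i 0 - _ - _ + _]addrAC addrNK addrAC.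
Qed.

Lemma Wmp_split_last i (x : nat -> R) : (0 < d)%N ->
  Wmp d V i x = (V i 0%N - x d *: V i d) + \sum_(j <- index_iota 1 d) (- x j) *: V i j.
Proof.
move=> d_gt0; rewrite /Wmp big_nat_recr //= opprD addrAC.
by rewrite -sumrN addrA (eq_bigr _ (fun j _ => scaleNr (x j) (V i j))).
Qed.

Lemma kbdet_first_col_pencil x : (0 < d)%N ->
  kbdet d (replace_col V 0 (fun i => V i 0%N - x *: V i d)) =
  (-1) ^+ d.-1 *: (Deltad d V - x *: Delta0 d V).
Proof.
move=> d_gt0; have ltd1d : (d.-1 < d)%N by rewrite prednK.
apply: (canRL (signrZK d.-1)); rewrite -kbdet_rotate_cols //.
rewrite (eq_kbdet (N := replace_col (fun i j => V i j.+1) d.-1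
    (fun i => (- x) *: V i d + V i 0%N))); last first.
  move=> i j _ _; rewrite /replace_col.
  by case: (j == d.-1); rewrite //= addrC scaleNr.
rewrite kbdet_col_linear // addrC scaleNr; congr (_ - x *: _).
apply: eq_kbdet => i j _ _; rewrite /replace_col.
by case: eqP => // ->; rewrite prednK.
Qed.

End OperatorDeterminants.

Section TensorDixon.
Variables (F : fieldType) (d : nat) (n : nat -> nat).
Variable V : forall i : nat, nat -> 'M[F]_(n i).
Variables (s t : nat -> F) (xd : F).

Definition dixon_col i c := Wmp d V i (dixon_pt d s t xd c).

Lemma dixon_col_succ i m : (m.+1 < d)%N ->
  dixon_col i m.+1 = (s m.+1 - t m.+1) *: V i m.+1 + dixon_col i m.
Proof.
move=> ltm1d; rewrite /dixon_col (@Wmp_update _ _ _ _ _ m.+1 _ (dixon_pt d s t xd m)).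
- by rewrite /dixon_pt (ltn_eqF ltm1d) leqnn ltnn.
- exact: ltnW.
move=> j neqj; rewrite /dixon_pt; case: eqP => // _.
by rewrite leq_eqVlt ltnS (negbTE neqj).
Qed.

Definition dixon_partial m : forall i : nat, nat -> 'M[F]_(n i) :=
  fun i j => if (j <= m)%N then dixon_col i j else V i j.

Lemma kbdet_dixon_partial_succ m : (m.+1 < d)%N ->
  kbdet d (dixon_partial m.+1) = (s m.+1 - t m.+1) *: kbdet d (dixon_partial m).
Proof.
move=> ltm1d; have ltmd := ltnW ltm1d.
rewrite (eq_kbdet (N := replace_col (dixon_partial m) m.+1
    (fun i => (s m.+1 - t m.+1) *: V i m.+1 + dixon_partial m i m))); last first.
  move=> i j _ _; rewrite /replace_col /dixon_partial leqnn.
  case: eqVneq => [-> | neqj]; first by rewrite leqnn dixon_col_succ.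
  by rewrite leq_eqVlt (negbTE neqj) ltnS.
rewrite kbdet_col_linear // [X in _ + X](kbdet_alternate (c1 := m) (c2 := m.+1)) //; last first.
- by move=> i; rewrite /replace_col /dixon_partial eqxx (ltn_eqF (ltnSn m)) leqnn.
- by rewrite neq_ltn ltnSn.
rewrite addr0; congr (_ *: _); apply: eq_kbdet => i j _ _.
by rewrite /replace_col /dixon_partial; case: eqP => // ->; rewrite ltnn.
Qed.

Lemma kbdet_dixon_partial m : (m < d)%N ->
  kbdet d (dixon_partial m) =
  (\prod_(1 <= k < m.+1) (s k - t k)) *: kbdet d (dixon_partial 0).
Proof.
elim: m => [|m IHm] ltmd; first by rewrite big_geq ?scale1r.
rewrite kbdet_dixon_partial_succ // IHm ?(ltnW ltmd) // scalerA mulrC.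
by rewrite [in RHS]big_nat_recr.
Qed.

Lemma kbdet_dixon_partial0 : (0 < d)%N ->
  kbdet d (dixon_partial 0) =
  kbdet d (replace_col V 0 (fun i => V i 0%N - xd *: V i d)).
Proof.
move=> d_gt0.
rewrite -(@kbdet_add_col_combination _ _ _ _ _ _ (index_iota 1 d) (fun j => - s j)) //.
  apply: eq_kbdet => i j _ _; rewrite /dixon_partial /replace_col leqn0.
  case: eqP => // ->; rewrite /dixon_col Wmp_split_last // {1}/dixon_pt eqxx.
  congr (_ + _); apply: eq_big_nat => k /andP[k_gt0 ltkd].
  by rewrite /dixon_pt (ltn_eqF ltkd) leqNgt k_gt0.
apply/allP => j; rewrite mem_index_iota => /andP[j_gt0 ->].
by rewrite -lt0n.
Qed.

Lemma fDixon_operator_pencil : (0 < d)%N ->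
  (forall k, (0 < k < d)%N -> s k != t k) ->
  fDixon d V s t xd = (-1) ^+ d.-1 *: (Deltad d V - xd *: Delta0 d V).
Proof.
move=> d_gt0 neq_st; have ltd1d : (d.-1 < d)%N by rewrite prednK.
have prod_neq0 : \prod_(1 <= k < d) (s k - t k) != 0.
  rewrite prodf_seq_neq0; apply/allP => k; rewrite mem_index_iota => k_range.
  by rewrite subr_eq0 neq_st.
rewrite /fDixon (eq_kbdet (N := dixon_partial d.-1)); last first.
  by move=> i j _ ltjd; rewrite /dixon_partial -ltnS prednK ?ltjd.
rewrite kbdet_dixon_partial // prednK // scalerA mulVf // scale1r.
by rewrite kbdet_dixon_partial0 // kbdet_first_col_pencil.
Qed.

End TensorDixon.

Theorem propositionA1 (R : realType) (d : nat) (n : nat -> nat)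
    (V : forall i : nat, nat -> 'M[complex R]_(n i)) :
  (2 <= d)%N ->
  exists c : complex R, (c = 1 \/ c = -1) /\
    forall (s t : nat -> complex R) (xd : complex R),
      (forall k : nat, (0 < k < d)%N -> s k != t k) ->
      fDixon d V s t xd = c *: (Deltad d V - xd *: Delta0 d V).
Proof.
move=> le2d; exists ((-1) ^+ d.-1); split.
  by rewrite -signr_odd; case: odd; [right | left].
by move=> s t xd; apply: fDixon_operator_pencil; apply: ltnW.
Qed.
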